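(* With the setup in the context, suppose $Q>2m$. Let $\varphi_1,\varphi_2$ be unit-norm eigenvectors of $H$ for its two largest eigenvalues $\lambda_1>\lambda_2$, with signs chosen so that $\varphi_1(v_1)\ge0$ and $\varphi_2(v_1)\ge0$. Then $$\varphi_1(v_1)\ \ge\ \sqrt{\tfrac12-\tfrac{m}{2Q^2}}-\sqrt{\tfrac{m}{Q-m}},\qquad \varphi_2(v_1)\ \ge\ \sqrt{\tfrac12-\tfrac{m}{2Q^2}}-\sqrt{\tfrac{m+1}{Q-m-1}}.$$
   Context: $G$ is a finite, simple, connected graph with vertex set $V$, maximum degree $m$, and an involution $\sigma$ (a bijection $V\to V$ with $\sigma\circ\sigma=\mathrm{id}$ such that $x\sim y$ implies $\sigma(x)\sim\sigma(y)$). Fix $v_1\in V$ with $v_1':=\sigma(v_1)\ne v_1$, and let $H=A_G+D_Q$ be the adjacency matrix of $G$ plus the diagonal potential matrix, with potential $Q$ at $v_1$ and $v_1'$ and $0$ elsewhere. For an eigenvector $\varphi$, $\varphi(x)$ denotes its entry at vertex $x$. *)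

From HB Require Import structures.
From mathcomp Require Import all_boot all_order all_algebra.
From mathcomp Require Import reals.
Set Implicit Arguments. Unset Strict Implicit. Unset Printing Implicit Defensive.
Import Order.TTheory GRing.Theory Num.Theory.
Local Open Scope ring_scope.

Definition simple_graph (V : finType) (adj : rel V) : Prop :=
  symmetric adj /\ irreflexive adj.

Definition connected_graph (V : finType) (adj : rel V) : Prop :=
  forall x y : V, connect adj x y.

Definition degree (V : finType) (adj : rel V) (x : V) : nat :=
  #|[set y | adj x y]|.

Definition max_degree (V : finType) (adj : rel V) : nat :=
  (\max_(x : V) degree adj x)%N.

Definition graph_involution (V : finType) (adj : rel V) (sigma : V -> V) : Prop :=
  involutive sigma /\ (forall x y, adj x y -> adj (sigma x) (sigma y)).

(* The operator H = A_G + D_Q acting on vectors phi : V -> R, where the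
   potential is Q at v1 and at v1' = sigma v1, and 0 elsewhere. *)
Definition potential (R : realType) (V : finType) (sigma : V -> V) (v1 : V)
  (Q : R) (x : V) : R :=
  if (x == v1) || (x == sigma v1) then Q else 0.

Definition Hop (R : realType) (V : finType) (adj : rel V) (sigma : V -> V)
  (v1 : V) (Q : R) (phi : V -> R) (x : V) : R :=
  \sum_(y | adj x y) phi y + potential sigma v1 Q x * phi x.

Definition is_eigenvalue (R : realType) (V : finType) (adj : rel V)
  (sigma : V -> V) (v1 : V) (Q : R) (lambda : R) : Prop :=
  exists phi : V -> R, (exists x, phi x != 0) /\
    forall x, Hop adj sigma v1 Q phi x = lambda * phi x.

Definition is_eigenvector (R : realType) (V : finType) (adj : rel V)
  (sigma : V -> V) (v1 : V) (Q : R) (lambda : R) (phi : V -> R) : Prop :=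
  (exists x, phi x != 0) /\ forall x, Hop adj sigma v1 Q phi x = lambda * phi x.

Definition unit_norm (R : realType) (V : finType) (phi : V -> R) : Prop :=
  \sum_(x : V) phi x ^+ 2 = 1.

(* The eigenvalues lambda1, lambda2 are identified variationally.  lambda1 is the
   maximum of the Rayleigh quotient of H; since H has nonnegative entries and G is
   connected, its maximizer phi1 is positive and simple (Perron-Frobenius), and as
   phi1 \o sigma is again a maximizer, phi1 (sigma v1) = phi1 v1.  The maximum over
   the orthogonal complement of phi1 is an eigenvalue other than lambda1, hence at
   most lambda2.  The test vectors e_v1 and e_v1 - e_(sigma v1) give lambda1 >= Q and
   lambda2 >= Q - 1.  Off {v1, sigma v1} an eigenvector satisfies lambda phi = A phi
   and |A| <= m, so its mass there is at most m^2 / lambda^2.  For phi1 this forces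
   2 phi1(v1)^2 >= 1 - m^2 / Q^2; for phi2, orthogonality to phi1 and Cauchy-Schwarz
   bound phi2(v1) + phi2(sigma v1) from below, and the mass bound does the rest. *)

From mathcomp Require Import all_boot all_order all_algebra.
From mathcomp Require Import reals.
From mathcomp Require Import all_classical all_analysis.
Import numFieldNormedType.Exports.
From mathcomp Require Import ring lra.
Set Implicit Arguments. Unset Strict Implicit. Unset Printing Implicit Defensive.
Import Order.TTheory GRing.Theory Num.Theory.
Local Open Scope ring_scope.

Section FunctionDot.
Variables (R : realType) (V : finType).
Implicit Types (f g h : V -> R) (a b : R).

Definition fdot f g : R := \sum_x f x * g x.

Definition delta (t : V) : V -> R := fun x => (x == t)%:R.

Lemma fdotC f g : fdot f g = fdot g f.
Proof. by apply: eq_bigr => x _; rewrite mulrC. Qed.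

Lemma fdotDl a b f g h :
  fdot (fun x => a * f x + b * g x) h = a * fdot f h + b * fdot g h.
Proof. rewrite /fdot !mulr_sumr -big_split; apply: eq_bigr => x _ /=; ring. Qed.

Lemma fdotDr a b f g h :
  fdot h (fun x => a * f x + b * g x) = a * fdot h f + b * fdot h g.
Proof. by rewrite fdotC fdotDl !(fdotC h). Qed.

Lemma fdotZl a f h : fdot (fun x => a * f x) h = a * fdot f h.
Proof. rewrite /fdot mulr_sumr; apply: eq_bigr => x _ /=; ring. Qed.

Lemma fdotZr a f h : fdot h (fun x => a * f x) = a * fdot h f.
Proof. by rewrite fdotC fdotZl fdotC. Qed.

Lemma fdotDD a b f g :
  fdot (fun x => a * f x + b * g x) (fun x => a * f x + b * g x) =
  a ^+ 2 * fdot f f + 2 * a * b * fdot f g + b ^+ 2 * fdot g g.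
Proof. rewrite fdotDl !fdotDr (fdotC g f); ring. Qed.

Lemma sum_sqr_fdot f : \sum_x f x ^+ 2 = fdot f f.
Proof. by apply: eq_bigr => x _; rewrite expr2. Qed.

Lemma fdot0r f : fdot f (fun _ => 0) = 0.
Proof. by rewrite /fdot big1 // => x _; rewrite mulr0. Qed.

Lemma fdot_ge0 f : 0 <= fdot f f.
Proof. by rewrite -sum_sqr_fdot sumr_ge0 // => x _; rewrite sqr_ge0. Qed.

Lemma fdot_eq0 f : fdot f f = 0 -> forall x, f x = 0.
Proof.
rewrite -sum_sqr_fdot => /psumr_eq0P f0 x.
by apply/eqP; rewrite -sqrf_eq0 f0 // => y _; rewrite sqr_ge0.
Qed.

Lemma fdot_gt0 f x : f x != 0 -> 0 < fdot f f.
Proof.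
move=> fx; rewrite lt_neqAle fdot_ge0 andbT eq_sym.
by apply: contra fx => /eqP/fdot_eq0->.
Qed.

Lemma fdot_norm f : fdot (fun x => `|f x|) (fun x => `|f x|) = fdot f f.
Proof. by apply: eq_bigr => x _; rewrite -normrM ger0_norm // -expr2 sqr_ge0. Qed.

Lemma fdot_delta t g : fdot (delta t) g = g t.
Proof.
rewrite /fdot (bigD1 t) //= /delta eqxx mul1r big1 ?addr0 // => x /negPf->.
by rewrite mul0r.
Qed.

Lemma unit_fdot_neq0 f : fdot f f = 1 -> exists x, f x != 0.
Proof.
move=> f1; apply/existsP; apply: contraT; rewrite negb_exists => /forallP f0.
have : fdot f f = 0 by rewrite /fdot big1 // => x _; rewrite (eqP (negbNE (f0 x))) mul0r.
by rewrite f1 => /eqP; rewrite oner_eq0.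
Qed.

End FunctionDot.

Arguments delta {R V} t _.

Lemma sqr_sum_mul_le (R : realType) (I : finType) (P : pred I) (f g : I -> R) :
  (\sum_(i | P i) f i * g i) ^+ 2 <=
  (\sum_(i | P i) f i ^+ 2) * (\sum_(i | P i) g i ^+ 2).
Proof.
set A := \sum_(i | P i) f i ^+ 2; set B := \sum_(i | P i) f i * g i.
set C := \sum_(i | P i) g i ^+ 2.
have C0 : 0 <= C by rewrite sumr_ge0 // => i _; rewrite sqr_ge0.
have [Cz|Cneq0] := eqVneq C 0.
  have g0 i : P i -> g i = 0.
    by move=> Pi; apply/eqP; rewrite -sqrf_eq0 (psumr_eq0P _ Cz) // => j _; rewrite sqr_ge0.
  by rewrite /B big1 ?expr0n ?mulr_ge0 ?sumr_ge0 // => i Pi; rewrite ?g0 ?mulr0 ?sqr_ge0.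
have Cgt0 : 0 < C by rewrite lt_neqAle eq_sym Cneq0.
have expand t : \sum_(i | P i) (f i - t * g i) ^+ 2 = A - 2 * t * B + t ^+ 2 * C.
  rewrite /A /B /C !mulr_sumr -sumrB -big_split /=; apply: eq_bigr => i _; ring.
have : 0 <= A - 2 * (B / C) * B + (B / C) ^+ 2 * C.
  by rewrite -expand sumr_ge0 // => i _; rewrite sqr_ge0.
have -> : A - 2 * (B / C) * B + (B / C) ^+ 2 * C = A - B ^+ 2 / C by field.
by rewrite subr_ge0 ler_pdivrMr // mulrC.
Qed.

Lemma quad_ge0_lin_coef_eq0 (R : realType) (b c : R) :
  0 <= c -> (forall t, 0 <= 2 * t * b + t ^+ 2 * c) -> b = 0.
Proof.
move=> c0 quad_ge0; set k := (c + 1)^-1; set t := - b * k.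
have k0 : 0 < k by rewrite invr_gt0; lra.
have tc : t ^+ 2 * (c + 1) = - b * t.
  have tc1 : t * (c + 1) = - b by rewrite -mulrA mulVf ?mulr1 // lt0r_neq0 //; lra.
  by rewrite expr2 -mulrA tc1 mulrC.
have := quad_ge0 t => h.
have : b ^+ 2 * k <= 0 by rewrite /t in h tc *; nra.
by rewrite pmulr_lle0 // => b2; apply/eqP; rewrite -sqrf_eq0 eq_le b2 sqr_ge0.
Qed.

Section SymmetricKernel.
Variables (R : realType) (V : finType) (A : V -> V -> R).
Hypothesis A_sym : forall x y, A x y = A y x.
Implicit Types (f g u w z : V -> R) (a b lam mu : R).

Definition kapp f x : R := \sum_y A x y * f y.

Definition qform f : R := fdot f (kapp f).

Definition eigenfun lam f : Prop := forall x, kapp f x = lam * f x.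

Lemma eigenfun0 lam : eigenfun lam (fun _ => 0).
Proof. by move=> x; rewrite /kapp big1 ?mulr0 // => y _; rewrite mulr0. Qed.

Lemma kappD a b f g :
  kapp (fun y => a * f y + b * g y) = (fun x => a * kapp f x + b * kapp g x).
Proof.
apply: funext => x; rewrite /kapp !mulr_sumr -big_split.
by apply: eq_bigr => y _ /=; ring.
Qed.

Lemma kappZ a f : kapp (fun y => a * f y) = (fun x => a * kapp f x).
Proof. apply: funext => x; rewrite /kapp mulr_sumr; apply: eq_bigr => y _ /=; ring. Qed.

Lemma fdot_kappC f g : fdot f (kapp g) = fdot (kapp f) g.
Proof.
rewrite /fdot /kapp; under eq_bigr do rewrite mulr_sumr.
under [RHS]eq_bigr do rewrite mulr_suml.
rewrite exchange_big; apply: eq_bigr => x _; apply: eq_bigr => y _.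
by rewrite A_sym; ring.
Qed.

Lemma qformD a b f g :
  qform (fun x => a * f x + b * g x) =
  a ^+ 2 * qform f + 2 * a * b * fdot f (kapp g) + b ^+ 2 * qform g.
Proof.
by rewrite /qform kappD fdotDl !fdotDr (fdotC g) -fdot_kappC; ring.
Qed.

Lemma qformZ a f : qform (fun x => a * f x) = a ^+ 2 * qform f.
Proof.
by rewrite /qform kappZ fdotZl fdotZr mulrA -expr2.
Qed.

Lemma fdot_kapp_eigen lam f g : eigenfun lam g -> fdot f (kapp g) = lam * fdot f g.
Proof. by move=> eg; rewrite -fdotZr; apply: eq_bigr => x _; rewrite eg. Qed.

Lemma qform_eigen lam f : eigenfun lam f -> qform f = lam * fdot f f.
Proof. exact: fdot_kapp_eigen. Qed.

Lemma eigenfun_orth lam mu f g :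
  eigenfun lam f -> eigenfun mu g -> lam != mu -> fdot f g = 0.
Proof.
move=> ef eg neq; apply/eqP; have := fdot_kappC f g.
rewrite (fdot_kapp_eigen f eg) (fdotC (kapp f)) (fdot_kapp_eigen g ef) (fdotC g) => /eqP.
by rewrite -subr_eq0 -mulrBl mulf_eq0 subr_eq0 eq_sym (negPf neq).
Qed.

Lemma qform_le_of_unit u mu :
  (forall z, fdot z z = 1 -> fdot z u = 0 -> qform z <= mu) ->
  forall z, fdot z u = 0 -> qform z <= mu * fdot z z.
Proof.
move=> unit_le z zu; have [zz0|zz_neq0] := eqVneq (fdot z z) 0.
  by rewrite zz0 mulr0 /qform /fdot big1 // => x _; rewrite (fdot_eq0 zz0) mul0r.
have zz_gt0 : 0 < fdot z z by rewrite lt_neqAle eq_sym zz_neq0 fdot_ge0.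
set k := (Num.sqrt (fdot z z))^-1.
have k2 : k ^+ 2 * fdot z z = 1 by rewrite exprVn sqr_sqrtr ?mulVf // ltW.
have := unit_le (fun x => k * z x).
rewrite fdotZl fdotZr mulrA -expr2 k2 fdotZl zu mulr0 qformZ => /(_ erefl erefl).
by rewrite -(ler_pM2l zz_gt0) mulrA [_ * k ^+ 2]mulrC k2 mul1r mulrC.
Qed.

(* First variation: along [y + t w] with [w] orthogonal to [u], the linear
   coefficient of the quadratic [mu |y + t w|^2 - qform (y + t w)] must vanish. *)
Lemma orth_max_eigenfun u y lam mu :
  eigenfun lam u -> fdot y u = 0 -> qform y = mu * fdot y y ->
  (forall z, fdot z u = 0 -> qform z <= mu * fdot z z) -> eigenfun mu y.
Proof.
move=> eu yu qy qmax.
pose B z := mu * fdot z y - fdot z (kapp y).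
have B0 w : fdot w u = 0 -> B w = 0.
  move=> wu; apply: (@quad_ge0_lin_coef_eq0 _ _ (mu * fdot w w - qform w)).
    by rewrite subr_ge0 qmax.
  move=> t; have := qmax (fun x => 1 * y x + t * w x).
  rewrite fdotDl yu wu !mulr0 addr0 => /(_ erefl).
  by rewrite qformD fdotDD qy /B fdot_kappC (fdotC _ y) (fdotC (kapp y)); lra.
move=> t.
pose c := if fdot u u == 0 then 0 else u t / fdot u u.
have wu : fdot (fun x => 1 * delta t x + - c * u x) u = 0.
  rewrite fdotDl fdot_delta /c; case: ifP => [/eqP uu0|/negbT uu_neq0].
    by rewrite uu0 (fdot_eq0 uu0) !mulr0 addr0.
  by rewrite mulNr divfK // mul1r subrr.
have := B0 _ wu; rewrite /B fdotDl fdotDl !fdot_delta (fdotC u y) yu.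
by rewrite fdot_kappC (fdotC (kapp u)) (fdot_kapp_eigen _ eu) yu; lra.
Qed.

Local Open Scope classical_set_scope.

Lemma exists_orth_max u :
  (exists z, fdot z z = 1 /\ fdot z u = 0) ->
  exists2 w, fdot w w = 1 /\ fdot w u = 0 &
    forall z, fdot z z = 1 -> fdot z u = 0 -> qform z <= qform w.
Proof.
move=> [z0 [z01 z0u]].
(* Maximize over the compact set of unit vectors orthogonal to [u], seen in ['rV_#|V|]. *)
pose fun_of (v : 'rV[R]_#|V|) : V -> R := fun x => v ord0 (enum_rank x).
pose row_of f : 'rV[R]_#|V| := \row_i f (enum_val i).
have row_ofK f : fun_of (row_of f) = f.
  by apply: funext => x; rewrite /fun_of mxE enum_rankK.
have coord_cont x : continuous (fun v => fun_of v x) by move=> v; apply: coord_continuous.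
have fdot_cont (g h : 'rV[R]_#|V| -> V -> R) :
    (forall x, continuous (fun v => g v x)) -> (forall x, continuous (fun v => h v x)) ->
    continuous (fun v => fdot (g v) (h v)).
  move=> gc hc; apply: (continuous_big add_continuous) => x _ v.
  by apply: continuousM; [apply: gc | apply: hc].
have kapp_cont x : continuous (fun v => kapp (fun_of v) x).
  apply: (continuous_big add_continuous) => y _ v.
  by apply: continuousM; [apply: cst_continuous | apply: coord_cont].
pose norm2 v := fdot (fun_of v) (fun_of v).
pose dot_u v := fdot (fun_of v) u.
pose S := norm2 @^-1` [set 1] `&` dot_u @^-1` [set 0].
have S_closed : closed S.
  apply: closedI; apply: preimage_closed; try exact: closed_eq.
    by move=> v _; apply: fdot_cont.
  by move=> v _; apply: fdot_cont => // x w; apply: cst_continuous.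
have S_compact : compact S.
  apply: (subclosed_compact S_closed
    (@rV_compact _ _ (fun=> `[(-1 : R), 1]%classic) (fun=> @segment_compact _ _ _))).
  move=> v [/= v_unit _] i; rewrite /= in_itv /= -ler_norml.
  have : fun_of v (enum_val i) ^+ 2 <= 1.
    rewrite -v_unit /norm2 -sum_sqr_fdot (bigD1 (enum_val i)) //= lerDl.
    by rewrite sumr_ge0 // => *; rewrite sqr_ge0.
  rewrite /fun_of enum_valK => v_le1.
  by rewrite -(expr_le1 (n := 2)) // real_normK ?num_real.
have S0 : S !=set0 by exists (row_of z0); rewrite /S /norm2 /dot_u /= row_ofK.
have [c cS cmax] := EVT_max_rV S0 S_compact
  (continuous_subspaceT (fdot_cont _ _ coord_cont kapp_cont)).
move: cS; rewrite inE => -[c1 cu].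
exists (fun_of c) => [|z z1 zu]; first by split.
by have := cmax (row_of z); rewrite inE /S /norm2 /dot_u /= row_ofK; apply.
Qed.

Lemma orth_top_eigenfun u lam :
  eigenfun lam u -> (exists z, fdot z z = 1 /\ fdot z u = 0) ->
  exists w, [/\ fdot w w = 1, fdot w u = 0, eigenfun (qform w) w &
    forall z, fdot z u = 0 -> qform z <= qform w * fdot z z].
Proof.
move=> eu /exists_orth_max [w [w1 wu] wmax].
have top := qform_le_of_unit wmax.
by exists w; split=> //; apply: orth_max_eigenfun eu wu _ top; rewrite w1 mulr1.
Qed.

End SymmetricKernel.

Section NonnegativeKernel.
Variables (R : realType) (V : finType) (A : V -> V -> R).
Hypotheses (A_sym : forall x y, A x y = A y x) (A_ge0 : forall x y, 0 <= A x y).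
Hypothesis A_connected : forall x y, connect [rel x y | 0 < A x y] x y.
Implicit Types (f g z : V -> R) (mu : R).

Lemma qform_le_norm f : qform A f <= qform A (fun x => `|f x|).
Proof.
apply: ler_sum => x _; rewrite !mulr_sumr; apply: ler_sum => y _.
apply: le_trans (ler_norm _) _.
by rewrite !normrM (ger0_norm (A_ge0 x y)).
Qed.

Lemma eigenfun_ge0_eq0 mu z x0 :
  (forall x, 0 <= z x) -> eigenfun A mu z -> z x0 = 0 -> forall x, z x = 0.
Proof.
move=> z_ge0 ez zx0 x.
have step y y' : z y = 0 -> 0 < A y y' -> z y' = 0.
  move=> zy Ayy'; have /psumr_eq0P Az0 : kapp A z y = 0 by rewrite ez zy mulr0.
  have /eqP := Az0 (fun _ _ => mulr_ge0 (A_ge0 _ _) (z_ge0 _)) y' isT.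
  by rewrite mulf_eq0 gt_eqF //= => /eqP.
have /connectP [p Ap ->] := A_connected x0 x.
by elim: p x0 Ap zx0 => [|y p IHp] x' //= /andP [Ax'y Ap] zx'; apply: IHp (step _ _ zx' Ax'y).
Qed.

Variable mu : R.
Hypothesis mu_top : forall z, qform A z <= mu * fdot z z.

(* [|f|] has the same Rayleigh quotient as [f], so it is also a maximizer. *)
Lemma top_eigenfun_norm f : eigenfun A mu f -> eigenfun A mu (fun x => `|f x|).
Proof.
move=> ef; apply: (orth_max_eigenfun A_sym (u := fun _ => 0) (lam := 0)).
- exact: eigenfun0.
- exact: fdot0r.
- by apply/eqP; rewrite eq_le mu_top fdot_norm -(qform_eigen ef) qform_le_norm.
- by move=> z _; apply: mu_top.
Qed.

Lemma top_eigenfun_neq0 f x0 : eigenfun A mu f -> f x0 != 0 -> forall x, f x != 0.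
Proof.
move=> ef fx0 x; apply: contra fx0 => /eqP fx.
have := eigenfun_ge0_eq0 (fun y => normr_ge0 (f y)) (top_eigenfun_norm ef).
by move=> /(_ x); rewrite fx normr0 => /(_ erefl x0) /normr0_eq0 ->.
Qed.

Lemma top_eigenfun_unique f g x0 :
  eigenfun A mu f -> f x0 != 0 -> eigenfun A mu g -> forall x, g x = g x0 / f x0 * f x.
Proof.
move=> ef fx0 eg x.
pose w y := f x0 * g y + - g x0 * f y.
have ew : eigenfun A mu w by move=> y; rewrite kappD ef eg /w; ring.
have wx0 : w x0 = 0 by rewrite /w mulrC mulNr subrr.
have wx : w x = 0.
  by apply/eqP; apply: contraT => /(top_eigenfun_neq0 ew)/(_ x0); rewrite wx0 eqxx.
by apply: (mulfI fx0); rewrite mulrA mulrCA mulfV // mulr1; move: wx; rewrite /w; lra.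
Qed.

Lemma top_eigenfun_gt0 f x0 : eigenfun A mu f -> 0 < f x0 -> forall x, 0 < f x.
Proof.
move=> ef fx0 x; have fx0_neq0 := lt0r_neq0 fx0.
have := top_eigenfun_unique ef fx0_neq0 (top_eigenfun_norm ef) x.
rewrite (gtr0_norm fx0) divff // mul1r => <-.
by rewrite normr_gt0 (top_eigenfun_neq0 ef fx0_neq0).
Qed.

End NonnegativeKernel.

Section GraphOperator.
Variables (R : realType) (V : finType) (adj : rel V) (sigma : V -> V) (v1 : V) (Q : R).
Hypotheses (adj_sym : symmetric adj) (adj_irr : irreflexive adj).
Implicit Types (f g : V -> R) (lam : R).

Local Notation pot := (potential sigma v1 Q).
Local Notation m := ((max_degree adj)%:R : R).

Definition Hkernel x y : R := (adj x y)%:R + pot x * (x == y)%:R.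

Lemma Hop_kappE : Hop adj sigma v1 Q = kapp Hkernel.
Proof.
apply: funext => f; apply: funext => x; rewrite /Hop /kapp.
under [RHS]eq_bigr do rewrite mulrDl; rewrite big_split /=.
congr (_ + _); first by rewrite big_mkcond; apply: eq_bigr => y _; case: adj; rewrite ?mul1r ?mul0r.
rewrite (bigD1 x) //= eqxx mulr1 big1 ?addr0 // => y.
by rewrite eq_sym => /negPf->; rewrite mulr0 mul0r.
Qed.

Lemma Hkernel_sym x y : Hkernel x y = Hkernel y x.
Proof. by rewrite /Hkernel adj_sym eq_sym; case: eqP => [->|]; rewrite ?mulr0. Qed.

Lemma potential_ge0 x : 0 <= Q -> 0 <= pot x.
Proof. by rewrite /potential; case: ifP. Qed.

Lemma Hkernel_ge0 : 0 <= Q -> forall x y, 0 <= Hkernel x y.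
Proof. by move=> Q_ge0 x y; rewrite addr_ge0 ?mulr_ge0 ?potential_ge0. Qed.

Lemma Hkernel_connected : 0 <= Q -> connected_graph adj ->
  forall x y, connect [rel x y | 0 < Hkernel x y] x y.
Proof.
move=> Q_ge0 conn x y; apply: connect_sub (conn x y) => {}x {}y xy.
apply: connect1; rewrite /= /Hkernel xy ltr_pwDl ?mulr_ge0 ?potential_ge0 //.
Qed.

Lemma kapp_delta t x : kapp Hkernel (delta t) x = Hkernel x t.
Proof. by rewrite -(fdot_delta t (Hkernel x)) fdotC. Qed.

Lemma qform_delta t : qform Hkernel (delta t) = pot t.
Proof. by rewrite /qform fdot_delta kapp_delta /Hkernel adj_irr eqxx add0r mulr1. Qed.

Lemma sum_adj_sqr_le f : \sum_x (\sum_(y | adj x y) f y) ^+ 2 <= m ^+ 2 * fdot f f.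
Proof.
have deg_le x : (degree adj x)%:R <= m by rewrite ler_nat; apply: leq_bigmax.
have deg_sum x : \sum_(y | adj x y) (1 : R) = (degree adj x)%:R.
  by rewrite sumr_const /degree cardsE.
(* Cauchy-Schwarz on each neighbourhood, then count each [f y ^ 2] [deg y] times *)
apply: le_trans (_ : \sum_x m * \sum_(y | adj x y) f y ^+ 2 <= _).
  apply: ler_sum => x _; under eq_bigr do rewrite -[f _]mul1r.
  apply: le_trans (sqr_sum_mul_le _ _ _) _.
  under eq_bigr do rewrite expr1n.
  by rewrite deg_sum ler_wpM2r ?sumr_ge0 // => y _; rewrite sqr_ge0.
rewrite -mulr_sumr expr2 -mulrA ler_wpM2l ?ler0n //.
have -> : \sum_x \sum_(y | adj x y) f y ^+ 2 = \sum_y (degree adj y)%:R * f y ^+ 2.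
  under eq_bigr do rewrite big_mkcond /=.
  rewrite exchange_big; apply: eq_bigr => y _.
  rewrite -deg_sum mulr_suml [RHS]big_mkcond /=; apply: eq_bigr => x _.
  by rewrite adj_sym; case: ifP; rewrite ?mul1r.
rewrite -sum_sqr_fdot mulr_sumr; apply: ler_sum => y _.
by rewrite ler_wpM2r ?sqr_ge0.
Qed.

(* Off [{v1, sigma v1}] the operator is the adjacency operator, whose norm is at most [m]. *)
Lemma eigenfun_outside_mass lam f : eigenfun Hkernel lam f ->
  lam ^+ 2 * \sum_(x | x \notin [set v1; sigma v1]) f x ^+ 2 <= m ^+ 2 * fdot f f.
Proof.
move=> ef; apply: le_trans (sum_adj_sqr_le f); rewrite mulr_sumr.
rewrite [X in _ <= X](bigID (mem [set v1; sigma v1])) /= -[X in X <= _]add0r.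
apply: lerD; first by rewrite sumr_ge0 // => x _; rewrite sqr_ge0.
apply: ler_sum => x x_out; rewrite -exprMn -ef -Hop_kappE /Hop.
by move: x_out; rewrite in_set2 /potential => /negPf->; rewrite mul0r addr0.
Qed.

Lemma eigenfun_of_eigenvector lam f :
  is_eigenvector adj sigma v1 Q lam f -> eigenfun Hkernel lam f.
Proof. by case=> _ ef x; rewrite -ef Hop_kappE. Qed.

Lemma is_eigenvalue_of_eigenfun lam f x :
  eigenfun Hkernel lam f -> f x != 0 -> is_eigenvalue adj sigma v1 Q lam.
Proof. by move=> ef fx; exists f; split; [exists x | move=> y; rewrite Hop_kappE ef]. Qed.

Hypothesis sigma_v1 : sigma v1 != v1.

Lemma sum_split_v1 (F : V -> R) :
  \sum_x F x = F v1 + F (sigma v1) + \sum_(x | x \notin [set v1; sigma v1]) F x.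
Proof.
rewrite (bigID (mem [set v1; sigma v1])) /= big_setU1 ?big_set1 //=.
by rewrite !inE eq_sym.
Qed.

Definition delta_diff : V -> R := fun x => 1 * delta v1 x + -1 * delta (sigma v1) x.

Lemma fdot_delta_diff f : fdot delta_diff f = f v1 - f (sigma v1).
Proof. by rewrite fdotDl !fdot_delta mul1r mulN1r. Qed.

Lemma qform_delta_diff : 2 * Q - 2 <= qform Hkernel delta_diff.
Proof.
rewrite qformD ?fdot_delta ?kapp_delta ?qform_delta; last exact: Hkernel_sym.
rewrite /potential !eqxx orbT /Hkernel eq_sym (negPf sigma_v1) mulr0 addr0 sqrrN expr1n /=.
have : (adj v1 (sigma v1))%:R <= 1 :> R by case: adj; rewrite ?lexx ?ler01.
lra.
Qed.

Hypotheses (sigmaK : involutive sigma) (sigma_adj : forall x y, adj x y -> adj (sigma x) (sigma y)).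

Lemma Hkernel_sigma x y : Hkernel (sigma x) (sigma y) = Hkernel x y.
Proof.
have adj_sigma : adj (sigma x) (sigma y) = adj x y.
  by apply/idP/idP => [/sigma_adj|/sigma_adj//]; rewrite !sigmaK.
rewrite /Hkernel /potential adj_sigma !(inj_eq (inv_inj sigmaK)).
by rewrite -{1}(sigmaK v1) (inj_eq (inv_inj sigmaK)) [(x == sigma v1) || _]orbC.
Qed.

Lemma eigenfun_sigma lam f :
  eigenfun Hkernel lam f -> eigenfun Hkernel lam (fun x => f (sigma x)).
Proof.
move=> ef x; rewrite -ef /kapp (reindex_inj (inv_inj sigmaK)) /=.
by apply: eq_bigr => y _; rewrite sigmaK -{1}(sigmaK x) Hkernel_sigma.
Qed.

End GraphOperator.

Arguments delta_diff {R V} sigma v1 _.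

Lemma sqrt_half_sub_le (R : realType) (m Q a E : R) :
  0 <= m -> 0 <= a + E -> 2^-1 <= (a + E) ^+ 2 ->
  Num.sqrt (2^-1 - m / (2 * Q ^+ 2)) - E <= a.
Proof.
move=> m_ge0 aE_ge0 aE2; rewrite lerBlDr -(ger0_norm aE_ge0) -sqrtr_sqr.
by apply: ler_wsqrtr; apply: le_trans _ aE2; rewrite gerBl divr_ge0 // mulr_ge0 ?sqr_ge0.
Qed.

Lemma sqr_mul_le_of_le (R : realType) (r l L m : R) :
  0 <= r -> 0 <= L <= l -> l ^+ 2 * r <= m ^+ 2 -> r * L ^+ 2 <= m ^+ 2.
Proof.
move=> r_ge0 /andP[L_ge0 Ll]; apply: le_trans.
by rewrite mulrC ler_wpM2r // lerXn2r ?nnegrE //; apply: le_trans Ll.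
Qed.

Lemma mul_le_of_sqr_mul_le (R : realType) (r L m : R) :
  0 <= r -> 0 <= m <= L -> r * L ^+ 2 <= m ^+ 2 -> r * L <= m.
Proof.
move=> r_ge0 /andP[m_ge0 mL] rL; have [L0|L_gt0] := eqVneq L 0.
  by rewrite L0 mulr0.
have {L_gt0} L_gt0 : 0 < L by rewrite lt0r L_gt0; apply: le_trans mL.
by rewrite -(ler_pM2r L_gt0) -mulrA -expr2; apply: le_trans rL _; rewrite expr2 ler_wpM2l.
Qed.

Lemma sqrt_ratio_sqr (R : realType) (a b : R) : 0 <= a -> 0 < b -> Num.sqrt (a / b) ^+ 2 * b = a.
Proof. by move=> a_ge0 b_gt0; rewrite sqr_sqrtr ?divfK ?gt_eqF // divr_ge0 // ltW. Qed.

Lemma first_coord_bound (R : realType) (Q m l a r : R) :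
  0 <= m -> 2 * m < Q -> Q <= l -> l ^+ 2 * r <= m ^+ 2 ->
  0 <= r -> 2 * a ^+ 2 + r = 1 -> 0 <= a ->
  Num.sqrt (2^-1 - m / (2 * Q ^+ 2)) - Num.sqrt (m / (Q - m)) <= a.
Proof.
move=> m_ge0 Q_gt Ql lr r_ge0 ar a_ge0.
have rQ2 : r * Q ^+ 2 <= m ^+ 2 by apply: sqr_mul_le_of_le lr => //; lra.
have rQ : r * Q <= m by apply: mul_le_of_sqr_mul_le rQ2 => //; lra.
have Qm_gt0 : 0 < Q - m by lra.
have E2 := sqrt_ratio_sqr m_ge0 Qm_gt0; set E := Num.sqrt _ in E2 *.
have E_ge0 : 0 <= E := sqrtr_ge0 _.
have rE : r <= E ^+ 2 by nra.
by apply: sqrt_half_sub_le => //; nra.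
Qed.

(* Used with [a, b] the values of [phi2] at [v1, sigma v1], [c] the common value of [phi1]
   there, [r1, r2] the masses of [phi1, phi2] elsewhere and [w] their inner product
   elsewhere, so that [c a + c b + w = 0] is the orthogonality of [phi1] and [phi2]. *)
Lemma second_coord_bound (R : realType) (Q m l1 l2 a b c w r1 r2 : R) :
  1 <= m -> 2 * m < Q -> Q <= l1 -> Q - 1 <= l2 ->
  l1 ^+ 2 * r1 <= m ^+ 2 -> l2 ^+ 2 * r2 <= m ^+ 2 -> 0 <= r1 -> 0 <= r2 ->
  2 * c ^+ 2 + r1 = 1 -> 0 < c -> a ^+ 2 + b ^+ 2 + r2 = 1 -> 0 <= a ->
  c * a + c * b + w = 0 -> w ^+ 2 <= r1 * r2 ->
  Num.sqrt (2^-1 - m / (2 * Q ^+ 2)) - Num.sqrt ((m + 1) / (Q - m - 1)) <= a.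
Proof.
move=> m_ge1 Q_gt Ql1 Ql2 l1r1 l2r2 r1_ge0 r2_ge0 cr1 c_gt0 abr2 a_ge0 abw wr.
have r1Q2 : r1 * Q ^+ 2 <= m ^+ 2 by apply: sqr_mul_le_of_le l1r1 => //; lra.
have r2Q2 : r2 * (Q - 1) ^+ 2 <= m ^+ 2 by apply: sqr_mul_le_of_le l2r2 => //; lra.
have r2Q : r2 * (Q - 1) <= m by apply: mul_le_of_sqr_mul_le r2Q2 => //; lra.
have Qm_gt0 : 0 < Q - m - 1 by lra.
have E2 := sqrt_ratio_sqr (_ : 0 <= m + 1) Qm_gt0; set E := Num.sqrt _ in E2 *.
have E_ge0 : 0 <= E := sqrtr_ge0 _.
have r2E : r2 <= E ^+ 2 by nra.
have r1_le : 4 * r1 <= 1 by nra.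
set p := a + b.
have cp : c ^+ 2 * p ^+ 2 <= r1 * r2 by have -> : c ^+ 2 * p ^+ 2 = w ^+ 2 by rewrite /p; nra.
have pr2 : p ^+ 2 <= r2 by nra.
have pE : - E <= p by nra.
have a2 : 2 * a ^+ 2 = 1 - r2 - p ^+ 2 + 2 * p * a by rewrite /p; nra.
by apply: sqrt_half_sub_le; [lra | nra | nra].
Qed.

Section Theorem6.
Variables (R : realType) (V : finType) (adj : rel V) (sigma : V -> V) (v1 : V).
Variables (Q lambda1 lambda2 : R) (phi1 phi2 : V -> R).
Hypotheses (adj_sym : symmetric adj) (adj_irr : irreflexive adj).
Hypothesis adj_connected : connected_graph adj.
Hypotheses (sigmaK : involutive sigma) (sigma_adj : forall x y, adj x y -> adj (sigma x) (sigma y)).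
Hypothesis sigma_v1 : sigma v1 != v1.

Local Notation m := ((max_degree adj)%:R : R).
Local Notation H := (Hkernel adj sigma v1 Q).

Hypothesis Q_gt : 2 * m < Q.
Hypotheses (phi1_eigen : is_eigenvector adj sigma v1 Q lambda1 phi1)
  (phi2_eigen : is_eigenvector adj sigma v1 Q lambda2 phi2).
Hypothesis lambda21 : lambda2 < lambda1.
Hypothesis spectral_gap :
  forall mu, is_eigenvalue adj sigma v1 Q mu -> mu = lambda1 \/ mu <= lambda2.
Hypotheses (phi1_unit : unit_norm phi1) (phi2_unit : unit_norm phi2).
Hypotheses (phi1_v1_ge0 : 0 <= phi1 v1) (phi2_v1_ge0 : 0 <= phi2 v1).

Let Q_ge0 : 0 <= Q. Proof. by apply: le_trans _ (ltW Q_gt); rewrite mulr_ge0 ?ler0n. Qed.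
Let H_sym := Hkernel_sym sigma v1 Q adj_sym.
Let H_ge0 := Hkernel_ge0 adj sigma v1 Q_ge0.
Let H_connected := Hkernel_connected sigma v1 Q_ge0 adj_connected.
Let e1 := eigenfun_of_eigenvector phi1_eigen.
Let e2 := eigenfun_of_eigenvector phi2_eigen.

Lemma max_degree_ge1 : 1 <= m.
Proof.
have /connectP [[|y p] /= path_p last_p] := adj_connected v1 (sigma v1).
  by move: sigma_v1; rewrite last_p eqxx.
case/andP: path_p => v1y _; rewrite ler1n; apply: leq_trans (leq_bigmax v1).
by rewrite /degree card_gt0; apply/set0Pn; exists y; rewrite inE.
Qed.

Lemma lambda1_top z : qform H z <= lambda1 * fdot z z.
Proof.
have [|w [w1 _ ew wtop]] := orth_top_eigenfun H_sym (eigenfun0 H 0).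
  by exists (delta v1); rewrite fdot_delta fdot0r /delta eqxx.
have [[x1 phi1x1] _] := phi1_eigen.
have lambda1_le : lambda1 <= qform H w.
  by rewrite -(ler_pM2r (fdot_gt0 phi1x1)) -(qform_eigen e1) wtop ?fdot0r.
have [w0 wx0] := unit_fdot_neq0 w1.
have [<-|w_le] := spectral_gap (is_eigenvalue_of_eigenfun ew wx0).
  by rewrite wtop ?fdot0r.
by exfalso; move: lambda21 lambda1_le w_le; lra.
Qed.

Lemma Q_le_lambda1 : Q <= lambda1.
Proof.
by have := lambda1_top (delta v1); rewrite qform_delta // fdot_delta /delta /potential !eqxx mulr1.
Qed.

Lemma phi1_gt0 x : 0 < phi1 x.
Proof.
have [[x1 phi1x1] _] := phi1_eigen.
have phi1v1 := top_eigenfun_neq0 H_sym H_ge0 H_connected lambda1_top e1 phi1x1 v1.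
have phi1v1_gt0 : 0 < phi1 v1 by rewrite lt0r phi1v1.
exact: (top_eigenfun_gt0 H_sym H_ge0 H_connected lambda1_top e1 phi1v1_gt0 x).
Qed.

(* The top eigenvector is simple and [phi1 \o sigma] is another one. *)
Lemma phi1_sigma_v1 : phi1 (sigma v1) = phi1 v1.
Proof.
have := top_eigenfun_unique H_sym H_ge0 H_connected lambda1_top e1
  (lt0r_neq0 (phi1_gt0 v1)) (eigenfun_sigma sigmaK sigma_adj e1) (sigma v1).
rewrite sigmaK => phi1v1.
have : phi1 v1 * phi1 v1 = phi1 (sigma v1) * phi1 (sigma v1).
  by rewrite {1}phi1v1 mulrAC divfK // lt0r_neq0 // phi1_gt0.
by have := phi1_gt0 v1; have := phi1_gt0 (sigma v1); nra.
Qed.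

Lemma lambda2_ge : Q - 1 <= lambda2.
Proof.
set k := (Num.sqrt 2)^-1 : R.
have d_phi1 : fdot (delta_diff sigma v1) phi1 = 0 by rewrite fdot_delta_diff phi1_sigma_v1 subrr.
have dd : fdot (delta_diff sigma v1) (delta_diff sigma v1) = 2 :> R.
  rewrite fdot_delta_diff /delta_diff /delta !eqxx (negPf sigma_v1) eq_sym (negPf sigma_v1).
  by rewrite /= mulr0 addr0 mulr1; lra.
have [|w [w1 w_phi1 ew wtop]] := orth_top_eigenfun H_sym e1.
  exists (fun x => k * delta_diff sigma v1 x); split; last by rewrite fdotZl d_phi1 mulr0.
  by rewrite fdotZl fdotZr mulrA -expr2 dd exprVn sqr_sqrtr ?mulVf.
have Q_le : Q - 1 <= qform H w.
  have := wtop _ d_phi1; rewrite dd; have := qform_delta_diff Q adj_sym adj_irr sigma_v1; lra.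
have [w0 wx0] := unit_fdot_neq0 w1.
have [qw|] := spectral_gap (is_eigenvalue_of_eigenfun ew wx0); last lra.
(* otherwise [w] would be a multiple of [phi1], yet orthogonal to it *)
rewrite qw in ew; have phi1v1 := lt0r_neq0 (phi1_gt0 v1).
have w_prop := top_eigenfun_unique H_sym H_ge0 H_connected lambda1_top e1 phi1v1 ew.
have : fdot w phi1 = w v1 / phi1 v1 * fdot phi1 phi1.
  by rewrite -fdotZl; apply: eq_bigr => x _; rewrite -w_prop.
rewrite w_phi1 -sum_sqr_fdot phi1_unit mulr1 => c0.
by move: wx0; rewrite w_prop -c0 !mul0r eqxx.
Qed.

Lemma phi1_v1_lower :
  Num.sqrt (2^-1 - m / (2 * Q ^+ 2)) - Num.sqrt (m / (Q - m)) <= phi1 v1.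
Proof.
have := eigenfun_outside_mass adj_sym e1; rewrite -sum_sqr_fdot phi1_unit mulr1 => mass.
apply: first_coord_bound Q_gt Q_le_lambda1 mass _ _ phi1_v1_ge0 => //.
  by rewrite sumr_ge0 // => x _; rewrite sqr_ge0.
by move: phi1_unit; rewrite /unit_norm (sum_split_v1 sigma_v1) phi1_sigma_v1; lra.
Qed.

Lemma phi2_v1_lower :
  Num.sqrt (2^-1 - m / (2 * Q ^+ 2)) - Num.sqrt ((m + 1) / (Q - m - 1)) <= phi2 v1.
Proof.
have := eigenfun_outside_mass adj_sym e1; rewrite -sum_sqr_fdot phi1_unit mulr1 => mass1.
have := eigenfun_outside_mass adj_sym e2; rewrite -sum_sqr_fdot phi2_unit mulr1 => mass2.
have orth := eigenfun_orth H_sym e1 e2 (negbT (gt_eqF lambda21)).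
apply: (second_coord_bound max_degree_ge1 Q_gt Q_le_lambda1 lambda2_ge mass1 mass2
  _ _ _ (phi1_gt0 v1) _ phi2_v1_ge0 _ (sqr_sum_mul_le _ phi1 phi2)).
- by rewrite sumr_ge0 // => x _; rewrite sqr_ge0.
- by rewrite sumr_ge0 // => x _; rewrite sqr_ge0.
- by move: phi1_unit; rewrite /unit_norm (sum_split_v1 sigma_v1) phi1_sigma_v1; lra.
- by move: phi2_unit; rewrite /unit_norm (sum_split_v1 sigma_v1); apply: id.
- by move: orth; rewrite /fdot (sum_split_v1 sigma_v1) phi1_sigma_v1; apply: id.
Qed.

End Theorem6.

Theorem theorem6 (R : realType) (V : finType) (adj : rel V) (sigma : V -> V)
  (v1 : V) (Q lambda1 lambda2 : R) (phi1 phi2 : V -> R) :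
  simple_graph adj ->
  connected_graph adj ->
  graph_involution adj sigma ->
  sigma v1 != v1 ->
  2 * (max_degree adj)%:R < Q ->
  is_eigenvector adj sigma v1 Q lambda1 phi1 ->
  is_eigenvector adj sigma v1 Q lambda2 phi2 ->
  lambda2 < lambda1 ->
  (forall mu, is_eigenvalue adj sigma v1 Q mu -> mu = lambda1 \/ mu <= lambda2) ->
  unit_norm phi1 -> unit_norm phi2 ->
  0 <= phi1 v1 -> 0 <= phi2 v1 ->
  let m : R := (max_degree adj)%:R in
  Num.sqrt (2^-1 - m / (2 * Q ^+ 2)) - Num.sqrt (m / (Q - m)) <= phi1 v1 /\
  Num.sqrt (2^-1 - m / (2 * Q ^+ 2)) - Num.sqrt ((m + 1) / (Q - m - 1))
    <= phi2 v1.
Proof.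
move=> [adj_sym adj_irr] conn [sigmaK sigma_adj] sigma_v1 Q_gt e1 e2 l21 gap n1 n2 a1 a2 m.
split.
  exact: (phi1_v1_lower adj_sym adj_irr conn sigmaK sigma_adj sigma_v1 Q_gt
    e1 l21 gap n1 a1).
exact: (phi2_v1_lower adj_sym adj_irr conn sigmaK sigma_adj sigma_v1 Q_gt
  e1 e2 l21 gap n1 n2 a1 a2).
Qed.
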